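(* Fix an integer $k$ and a positive integer $N$. Let $\alpha_i,\beta_i,p_i,q_i,\eta_i,\xi_i$ ($i=1,\dots,N$) be real numbers, and let $F$ be the $N\times N$ matrix with entries $$F_{ij}=\alpha_ip_i^{k+j-1}e^{\eta_i}+\beta_iq_i^{k+j-1}e^{\xi_i},\qquad i,j=1,\dots,N.$$ Suppose $$q_N<q_{N-1}<\cdots<q_1<0<p_1<p_2<\cdots<p_N,\qquad \alpha_i>0,\qquad \operatorname{sgn}\beta_i=(-1)^{k+i-1}\quad(i=1,\dots,N).$$ Then $\det F>0$.
   Context: $\operatorname{sgn}$ denotes the sign function ($\operatorname{sgn}x=1$ for $x>0$, $-1$ for $x<0$). *)

From HB Require Import structures.
From mathcomp Require Import all_boot all_order all_algebra.
From mathcomp Require Import all_classical all_reals all_analysis.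
Set Implicit Arguments. Unset Strict Implicit. Unset Printing Implicit Defensive.
Import Order.TTheory GRing.Theory Num.Theory.
Local Open Scope ring_scope.

(* The matrix F of the paper, with 0-based indices: the paper's (i,j) entry
   corresponds to (i0,j0) = (i-1,j-1), so the exponent k+j-1 becomes k+j0. *)
Definition Fmat (R : realType) (N : nat) (k : int)
  (alpha beta p q eta xi : 'I_N -> R) : 'M[R]_N :=
  \matrix_(i < N, j < N)
    (alpha i * p i ^ (k + (j : nat)%:Z) * expR (eta i)
     + beta i * q i ^ (k + (j : nat)%:Z) * expR (xi i)).

From HB Require Import structures.
From mathcomp Require Import all_boot all_order all_algebra.
From mathcomp Require Import all_classical all_reals all_analysis.
From mathcomp Require Import perm ring lra.
Set Implicit Arguments.
Unset Strict Implicit.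
Unset Printing Implicit Defensive.
Import Order.TTheory GRing.Theory Num.Theory.
Local Open Scope ring_scope.

(* Each row of F is a sum of two exponential terms, so by multilinearity det F
   is the sum, over all choices of one term per row, of the determinants of
   row-scaled Vandermonde matrices with nodes x_i in {p_i, q_i}.  Each of them
   is positive: flipping the sign of the factors x_j - x_i with x_j = q_j makes
   every Vandermonde factor positive, and the resulting sign (-1)^j of row j is
   exactly compensated by sgn(beta_j q_j^k) = (-1)^(k+j) (-1)^k. *)

Lemma det_mx_sum (R : comPzRingType) (T : finType) n
    (c : T -> 'I_n -> 'I_n -> R) :
  \det (\matrix_(i, j) \sum_(t : T) c t i j) =
  \sum_(f : {ffun 'I_n -> T}) \det (\matrix_(i, j) c (f i) i j).
Proof.
rewrite /determinant.
transitivity (\sum_(s : 'S_n) \sum_(f : {ffun 'I_n -> T})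
                (-1) ^+ s * \prod_i c (f i) i (s i)).
  apply: eq_bigr => s _; rewrite -big_distrr /=; congr (_ * _).
  rewrite -(bigA_distr_bigA (fun i t => c t i (s i))).
  by apply: eq_bigr => i _; rewrite mxE.
rewrite exchange_big /=; apply: eq_bigr => f _; apply: eq_bigr => s _.
by congr (_ * _); apply: eq_bigr => i _; rewrite mxE.
Qed.

Lemma det_scaled_Vandermonde (F : fieldType) n (k : int) (c x : 'I_n -> F) :
  (forall i, x i != 0) ->
  \det (\matrix_(i, j) (c i * x i ^ (k + (j : nat)%:Z))) =
  \prod_i (c i * x i ^ k) * \prod_(i < n) \prod_(j < n | (i < j)%N) (x j - x i).
Proof.
move=> x_neq0.
have -> : \matrix_(i, j) (c i * x i ^ (k + (j : nat)%:Z))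
    = diag_mx (\row_i (c i * x i ^ k)) *m (Vandermonde n (\row_i x i))^T.
  by apply/matrixP => i j; rewrite mul_diag_mx !mxE expfzDr // -exprnP mulrA.
rewrite det_mulmx det_tr det_diag det_Vandermonde.
congr (_ * _); apply: eq_bigr => i _; first by rewrite mxE.
by apply: eq_bigr => j _; rewrite !mxE.
Qed.

Lemma prod_ltn_mull (R : comPzSemiRingType) n (e : 'I_n -> R)
    (d : 'I_n -> 'I_n -> R) :
  \prod_(i < n) \prod_(j < n | (i < j)%N) (e j * d i j) =
  \prod_(j < n) e j ^+ j * \prod_(i < n) \prod_(j < n | (i < j)%N) d i j.
Proof.
under eq_bigr do rewrite big_split /=.
rewrite big_split /=; congr (_ * _).
rewrite (exchange_big_dep xpredT) //=; apply: eq_bigr => j _.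
rewrite -(big_ord_widen n (fun _ => e j) (ltnW (ltn_ord j))).
by rewrite prodr_const card_ord.
Qed.

Lemma prod_sign_twist_gt0 (R : realDomainType) n (a e : 'I_n -> R)
    (d : 'I_n -> 'I_n -> R) :
  (forall j, e j * e j = 1) ->
  (forall j, 0 < a j * e j ^+ j) ->
  (forall i j : 'I_n, (i < j)%N -> 0 < e j * d i j) ->
  0 < \prod_j a j * \prod_(i < n) \prod_(j < n | (i < j)%N) d i j.
Proof.
move=> e_sq a_gt0 d_gt0.
set s := \prod_j e j ^+ j.
have s_sq : s * s = 1.
  by rewrite -big_split big1 // => j _ /=; rewrite -exprMn e_sq expr1n.
have : 0 < \prod_j (a j * e j ^+ j) *
           \prod_(i < n) \prod_(j < n | (i < j)%N) (e j * d i j).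
  by apply: mulr_gt0; apply: prodr_gt0 => i // _; apply: prodr_gt0 => j /d_gt0.
by rewrite prod_ltn_mull big_split /= -/s -mulrA (mulrA s) s_sq mul1r.
Qed.

Section DetF.

Variables (R : realType) (N : nat) (k : int) (alpha beta p q eta xi : 'I_N -> R).
Hypotheses (p_gt0 : forall i, 0 < p i) (q_lt0 : forall i, q i < 0)
  (p_incr : forall i j : 'I_N, (i < j)%N -> p i < p j)
  (q_decr : forall i j : 'I_N, (i < j)%N -> q j < q i)
  (alpha_gt0 : forall i, 0 < alpha i)
  (sg_beta : forall i : 'I_N, Num.sg (beta i) = (-1) ^ (k + (i : nat)%:Z)).

Definition node (b : bool) (i : 'I_N) : R := if b then p i else q i.
Definition weight (b : bool) (i : 'I_N) : R :=
  if b then alpha i * expR (eta i) else beta i * expR (xi i).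
Definition flip (b : bool) : R := if b then 1 else -1.

Lemma Fmat_row_sum :
  Fmat k alpha beta p q eta xi =
  \matrix_(i, j) \sum_(b : bool) weight b i * node b i ^ (k + (j : nat)%:Z).
Proof. by apply/matrixP => i j; rewrite !mxE big_bool /weight /node /=; ring. Qed.

Lemma node_neq0 (b : bool) (i : 'I_N) : node b i != 0.
Proof. by case: b; [exact: lt0r_neq0 | exact: ltr0_neq0]. Qed.

Lemma flip_node_gap b b' (i j : 'I_N) :
  (i < j)%N -> 0 < flip b' * (node b' j - node b i).
Proof.
move=> ij; have := p_gt0 i; have := p_gt0 j; have := q_lt0 i; have := q_lt0 j.
by have := p_incr ij; have := q_decr ij; case: b; case: b' => /=; lra.
Qed.

Lemma weight_node_flip_gt0 b (j : 'I_N) :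
  0 < weight b j * node b j ^ k * flip b ^+ j.
Proof.
case: b => /=; first by rewrite expr1n mulr1 !mulr_gt0 ?expR_gt0 ?exprz_gt0.
set s : R := (-1) ^ (k + (j : nat)%:Z).
have s_sq : s * s = 1 by rewrite -expfzMl mulrNN mulr1 exp1rz.
have beta_gt0 : 0 < `|beta j|.
  by rewrite normr_gt0 -sgr_eq0 sg_beta expfz_neq0 // oppr_eq0 oner_eq0.
have qk_sign : q j ^ k * (-1) ^+ j = s * (- q j) ^ k.
  rewrite /s expfzDr ?oppr_eq0 ?oner_eq0 // -exprnP.
  rewrite [in LHS](_ : q j = -1 * - q j); last by rewrite mulN1r opprK.
  by rewrite expfzMl; ring.
rewrite [beta j]numEsg sg_beta -/s -mulrA qk_sign.
have -> : s * `|beta j| * expR (xi j) * (s * (- q j) ^ k) =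
          (s * s) * (`|beta j| * expR (xi j) * (- q j) ^ k) by ring.
by rewrite s_sq mul1r !mulr_gt0 ?expR_gt0 ?exprz_gt0 ?oppr_gt0.
Qed.

Lemma det_Fmat_term_gt0 (f : {ffun 'I_N -> bool}) :
  0 < \det (\matrix_(i, j) (weight (f i) i * node (f i) i ^ (k + (j : nat)%:Z))).
Proof.
rewrite det_scaled_Vandermonde => [|i]; last exact: node_neq0.
apply: (@prod_sign_twist_gt0 _ _ _ (fun j => flip (f j))) => [j|j|i j ij].
- by rewrite /flip; case: (f j); rewrite ?mulrNN mulr1.
- exact: weight_node_flip_gt0.
- exact: flip_node_gap.
Qed.

End DetF.

Theorem lemma4p6 (R : realType) (N : nat) (k : int)
  (alpha beta p q eta xi : 'I_N -> R) :
  (0 < N)%N ->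
  (forall i : 'I_N, 0 < p i) ->
  (forall i : 'I_N, q i < 0) ->
  (forall i j : 'I_N, (i < j)%N -> p i < p j) ->
  (forall i j : 'I_N, (i < j)%N -> q j < q i) ->
  (forall i : 'I_N, 0 < alpha i) ->
  (forall i : 'I_N, Num.sg (beta i) = (-1) ^ (k + (i : nat)%:Z)) ->
  0 < \det (Fmat k alpha beta p q eta xi).
Proof.
move=> _ p_gt0 q_lt0 p_incr q_decr alpha_gt0 sg_beta.
have term_gt0 := det_Fmat_term_gt0 eta xi p_gt0 q_lt0 p_incr q_decr alpha_gt0 sg_beta.
rewrite Fmat_row_sum det_mx_sum (bigD1 [ffun => true]) //=.
apply: ltr_wpDr; last exact: (term_gt0 [ffun => true]).
by apply: sumr_ge0 => f _; apply: ltW.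
Qed.
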